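(* Let $f:\mathbb{R}^n\to\mathbb{R}$ be strongly convex with constant $\mu\ge0$, let $\gamma_k>0$, $\delta_k>0$, $s_k>0$ for all $k$, and let $\{x_k\}$ be generated by the random incremental penalty method. Assume there is $M>0$ such that, almost surely, for all $k\ge1$, $\|\tilde\nabla f(x_k)\|\le M$ and $\|v\|\le M$ for every $v\in\partial f(\Pi_X[x_k])$. Then, for arbitrary $\eta\in[0,1]$, almost surely for all $y\in X$ and $k\ge1$, $$\begin{aligned}\mathbb{E}\big[\|x_{k+1}-y\|^2\mid\mathcal{F}_k\big]\le{}&(1-\mu s_k)\|x_k-y\|^2+2s_k(1-\eta)\big(f(y)-f(x_k)\big)+2s_k\eta\big(f(y)-f(\Pi_X[x_k])\big)\\&+\frac{s_k\gamma_k\delta_k}{2\alpha_{\min}}-2s_k\Big(\frac{\gamma_k}{m\beta}-\eta M\Big)\mathrm{dist}(x_k,X)-\eta\mu s_k\,\mathrm{dist}^2(x_k,X)+2s_k^2(M^2+\gamma_k^2).\end{aligned}$$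
   Context: Let $a_1,\dots,a_m\in\mathbb{R}^n$ be nonzero vectors and $b_1,\dots,b_m\in\mathbb{R}$; $X_i=\{x:\langle a_i,x\rangle-b_i\le0\}$, $X=\bigcap_{i=1}^mX_i$ (assumed nonempty), $\alpha_{\min}=\min_i\|a_i\|$; $\Pi_X$ is the Euclidean projection onto $X$. $\beta>0$ is a Hoffman constant: a scalar with $\beta\sum_{i=1}^m\mathrm{dist}(x,X_i)\ge\mathrm{dist}(x,X)$ for all $x$. Strong convexity with constant $\mu\ge0$ means $f(u)\ge f(v)+\langle g,u-v\rangle+\frac{\mu}{2}\|u-v\|^2$ for all $u,v$ and $g\in\partial f(v)$. For $\delta>0$, nonzero $a$ and scalar $b$: $h_\delta(x;a,b)=\frac{\langle a,x\rangle-b}{\|a\|}$ if $\langle a,x\rangle-b>\delta$, $\frac{(\langle a,x\rangle-b+\delta)^2}{4\delta\|a\|}$ if $-\delta\le\langle a,x\rangle-b\le\delta$, $0$ if $\langle a,x\rangle-b<-\delta$; $\nabla h_\delta(x;a,b)=\frac{1}{\|a\|}p'_\delta(\langle a,x\rangle-b)\,a$ with $p'_\delta(s)=1$ for $s>\delta$, $\frac{s+\delta}{2\delta}$ for $|s|\le\delta$, $0$ for $s<-\delta$. Random incremental penalty method: random $x_1$ with $\mathbb{E}\|x_1\|^2<\infty$; for $k\ge1$, $x_{k+1}=x_k-s_k\big[\tilde\nabla f(x_k)+\gamma_k\nabla h_{\delta_k}(x_k;a_{i_k},b_{i_k})\big]$ with $\tilde\nabla f(x_k)\in\partial f(x_k)$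 and $i_k$ uniform on $\{1,\dots,m\}$ independent of $x_1,i_1,\dots,i_{k-1}$. $\mathcal{F}_k$ is the $\sigma$-algebra generated by $x_1,\dots,x_k$. *)

From HB Require Import structures.
From mathcomp Require Import all_boot all_order all_algebra.
From mathcomp Require Import all_classical all_reals all_analysis.
Set Implicit Arguments. Unset Strict Implicit. Unset Printing Implicit Defensive.
Import Order.TTheory GRing.Theory Num.Theory.
Local Open Scope classical_set_scope.
Local Open Scope ring_scope.

Section Defs.
Variable R : realType.

Definition dotv n (u v : 'rV[R]_n) : R := \sum_(j < n) u ord0 j * v ord0 j.
Definition normv n (u : 'rV[R]_n) : R := Num.sqrt (dotv u u).

Definition distv n (x : 'rV[R]_n) (S : set 'rV[R]_n) : R :=
  inf [set normv (x - y) | y in S].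

Definition halfspace n (a : 'rV[R]_n) (b : R) : set 'rV[R]_n :=
  [set x | dotv a x - b <= 0].

Definition Xfeas n m (a : 'I_m -> 'rV[R]_n) (b : 'I_m -> R) : set 'rV[R]_n :=
  \bigcap_(i in setT) halfspace (a i) (b i).

Definition alpha_min n m (a : 'I_m -> 'rV[R]_n) : R :=
  inf (range (fun i => normv (a i))).

Definition is_proj n (S : set 'rV[R]_n) (x p : 'rV[R]_n) : Prop :=
  S p /\ forall q, S q -> normv (x - p) <= normv (x - q).

Definition subgrad n (f : 'rV[R]_n -> R) (v g : 'rV[R]_n) : Prop :=
  forall u, f v + dotv g (u - v) <= f u.

Definition strongly_convex n (f : 'rV[R]_n -> R) (mu : R) : Prop :=
  forall u v g, subgrad f v g ->
    f v + dotv g (u - v) + mu / 2 * normv (u - v) ^+ 2 <= f u.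

Definition hoffman n m (a : 'I_m -> 'rV[R]_n) (b : 'I_m -> R) (beta : R) : Prop :=
  0 < beta /\
  forall x, distv x (Xfeas a b) <= beta * \sum_(i < m) distv x (halfspace (a i) (b i)).

Definition pdelta (delta s : R) : R :=
  if delta < s then 1 else if s < - delta then 0 else (s + delta) / (2 * delta).

Definition grad_h n (delta : R) (a : 'rV[R]_n) (b : R) (x : 'rV[R]_n) : 'rV[R]_n :=
  (pdelta delta (dotv a x - b) / normv a) *: a.

Definition rV_borel n : set (set 'rV[R]_n) :=
  <<s [set A | exists (j : 'I_n) (B : set R),
                 measurable B /\ A = (fun v : 'rV[R]_n => v ord0 j) @^-1` B] >>.

Definition rV_borel_fun n (g : 'rV[R]_n -> 'rV[R]_n) : Prop :=
  forall (j : 'I_n) (B : set R), measurable B ->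
    rV_borel ((fun v => g v ord0 j) @^-1` B).

Context d (T : measurableType d).

Definition rvec n (X : T -> 'rV[R]_n) : Prop :=
  forall j : 'I_n, measurable_fun setT (fun w => X w ord0 j).

Definition filtr n (x : nat -> T -> 'rV[R]_n) (k : nat) : set (set T) :=
  <<s [set A | exists (l : nat) (j : 'I_n) (B : set R),
                 [/\ (1 <= l <= k)%N, measurable B &
                     A = (fun w => x l w ord0 j) @^-1` B]] >>.

Definition past_sigma n m (x : nat -> T -> 'rV[R]_n) (i : nat -> T -> 'I_m)
    (k : nat) : set (set T) :=
  <<s [set A | (exists (j : 'I_n) (B : set R),
                  measurable B /\ A = (fun w => x 1%N w ord0 j) @^-1` B)
            \/ (exists (l : nat) (c : 'I_m),
                  (1 <= l < k)%N /\ A = i l @^-1` [set c])] >>.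

Definition cond_exp_version (P : probability T R) (F : set (set T))
    (X Z : T -> R) : Prop :=
  [/\ (forall B : set R, measurable B -> F (Z @^-1` B)),
      P.-integrable setT (fun w => (Z w)%:E) &
      forall A, F A ->
        (\int[P]_(w in A) (Z w)%:E = \int[P]_(w in A) (X w)%:E)%E].

End Defs.

(* Conditionally on F_k, the index i_k is uniform and independent of x_k, so
   E[|x_(k+1) - y|^2 | F_k] is the average over the m constraints of the squared
   distance to y after one deterministic penalty step from x_k.  For a single
   constraint, expanding the square leaves |x_k - y|^2 - 2 s <g, x_k - y>, the
   term -2 s gamma <grad h_delta, x_k - y> and s^2 |g + gamma grad h_delta|^2;
   the smoothed penalty has a gradient of norm at most 1 whose inner product with
   x_k - y is at least dist(x_k, X_i) - delta / (4 |a_i|).  After averaging, the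
   Hoffman bound turns the mean distance to the half-spaces into
   dist(x_k, X) / (m beta), and strong convexity, applied at x_k towards y and
   at Pi_X x_k towards x_k (with the subgradient bound M), supplies the
   function values, split with weights 1 - eta and eta.
   The conditional expectation is identified through its integrals over F_k,
   which only involve sigma(x_1, i_1, ..., i_(k-1)), independent of i_k. *)

From HB Require Import structures.
From mathcomp Require Import all_boot all_order all_algebra.
From mathcomp Require Import all_classical all_reals all_analysis.
From mathcomp Require Import measurable_realfun ring lra.
Import Order.TTheory GRing.Theory Num.Theory.
Local Open Scope classical_set_scope.
Local Open Scope ring_scope.
Set Implicit Arguments. Unset Strict Implicit. Unset Printing Implicit Defensive.

Section Euclid.
Variables (R : realType) (n : nat).
Implicit Types (u v w : 'rV[R]_n) (c : R).

Lemma dotvC u v : dotv u v = dotv v u.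
Proof. by apply: eq_bigr => j _; rewrite mulrC. Qed.

Lemma dotvDl u v w : dotv (u + v) w = dotv u w + dotv v w.
Proof. by rewrite /dotv -big_split; apply: eq_bigr => j _; rewrite !mxE mulrDl. Qed.

Lemma dotvDr u v w : dotv u (v + w) = dotv u v + dotv u w.
Proof. by rewrite dotvC dotvDl !(dotvC u). Qed.

Lemma dotvZl c u v : dotv (c *: u) v = c * dotv u v.
Proof. by rewrite /dotv mulr_sumr; apply: eq_bigr => j _; rewrite !mxE mulrA. Qed.

Lemma dotvZr c u v : dotv u (c *: v) = c * dotv u v.
Proof. by rewrite dotvC dotvZl dotvC. Qed.

Lemma dotvNl u v : dotv (- u) v = - dotv u v.
Proof. by rewrite -scaleN1r dotvZl mulN1r. Qed.

Lemma dotvNr u v : dotv u (- v) = - dotv u v.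
Proof. by rewrite dotvC dotvNl dotvC. Qed.

Lemma dotvBr u v w : dotv u (v - w) = dotv u v - dotv u w.
Proof. by rewrite dotvDr dotvNr. Qed.

Lemma dotv0l v : dotv 0 v = 0.
Proof. by apply: big1 => j _; rewrite mxE mul0r. Qed.

Lemma dotv0r u : dotv u 0 = 0.
Proof. by rewrite dotvC dotv0l. Qed.

Lemma dotvv_ge0 u : 0 <= dotv u u.
Proof. by apply: sumr_ge0 => j _; rewrite -expr2 sqr_ge0. Qed.

Lemma dotvv_eq0 u : (dotv u u == 0) = (u == 0).
Proof.
apply/eqP/eqP => [uu0|->]; last exact: dotv0l.
apply/rowP => j; rewrite mxE.
have /psumr_eq0P uj0 : \sum_(j < n) u ord0 j ^+ 2 = 0 by [].
by apply/eqP; rewrite -sqrf_eq0 uj0 // => i _; exact: sqr_ge0.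
Qed.

Lemma normv_ge0 u : 0 <= normv u.
Proof. exact: sqrtr_ge0. Qed.

Lemma normv_sqr u : normv u ^+ 2 = dotv u u.
Proof. by rewrite sqr_sqrtr // dotvv_ge0. Qed.

Lemma normv_gt0 u : (0 < normv u) = (u != 0).
Proof. by rewrite sqrtr_gt0 lt_def dotvv_ge0 dotvv_eq0 andbT. Qed.

Lemma normv0 : normv (0 : 'rV[R]_n) = 0.
Proof. by apply/eqP; rewrite eq_le normv_ge0 leNgt normv_gt0 eqxx. Qed.

Lemma normvZ c u : normv (c *: u) = `|c| * normv u.
Proof. by rewrite /normv dotvZl dotvZr mulrA -expr2 sqrtrM ?sqr_ge0 // sqrtr_sqr. Qed.

Lemma normvN u : normv (- u) = normv u.
Proof. by rewrite /normv dotvNl dotvNr opprK. Qed.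

Lemma sqr_normvB u v :
  normv (u - v) ^+ 2 = normv u ^+ 2 - 2 * dotv u v + normv v ^+ 2.
Proof. by rewrite !normv_sqr !(dotvDl, dotvDr, dotvNl, dotvNr) (dotvC v u); ring. Qed.

Lemma sqr_normvD_le u v :
  normv (u + v) ^+ 2 <= 2 * normv u ^+ 2 + 2 * normv v ^+ 2.
Proof.
have := dotvv_ge0 (u - v).
by rewrite !normv_sqr !(dotvDl, dotvDr, dotvNl, dotvNr) (dotvC v u); lra.
Qed.

Lemma dotv_ge_Nnormv u v : - (normv u * normv v) <= dotv u v.
Proof.
have [->|u0] := eqVneq u 0; first by rewrite normv0 mul0r oppr0 dotv0l.
have [->|v0] := eqVneq v 0; first by rewrite normv0 mulr0 oppr0 dotv0r.
have uv0 : 0 < normv u * normv v by rewrite mulr_gt0 ?normv_gt0.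
have := dotvv_ge0 (normv v *: u + normv u *: v).
rewrite !(dotvDl, dotvDr, dotvZl, dotvZr) -!normv_sqr (dotvC v u).
by move: (dotv u v) (normv u) (normv v) uv0 => X p q; nra.
Qed.

End Euclid.

Section Distance.
Variables (R : realType) (n : nat).
Implicit Types (x z q : 'rV[R]_n) (S : set 'rV[R]_n).

Lemma distv_le_normv x q S : S q -> distv x S <= normv (x - q).
Proof.
move=> Sq; apply: ge_inf; last by exists q.
by exists 0 => _ [y _ <-]; exact: normv_ge0.
Qed.

Lemma is_proj_distv S x p : is_proj S x p -> distv x S = normv (x - p).
Proof.
move=> [Sp hp]; apply/eqP; rewrite eq_le distv_le_normv //=.
apply: lb_le_inf; first by exists (normv (x - p)), p.
by move=> _ [q Sq <-]; exact: hp.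
Qed.

Lemma distv_halfspace_le (a : 'rV[R]_n) (b : R) z : a != 0 ->
  distv z (halfspace a b) <= Num.max 0 (dotv a z - b) / normv a.
Proof.
move=> a0; have na : 0 < normv a by rewrite normv_gt0.
set t := dotv a z - b; have [t_le0|t_gt0] := leP t 0.
  by rewrite mul0r -(normv0 R n) -(subrr z); exact: distv_le_normv.
pose q := z - (t / normv a ^+ 2) *: a.
have -> : t / normv a = normv (z - q).
  rewrite opprB addrC subrK normvZ ger0_norm ?divr_ge0 ?ltW ?exprn_gt0 //.
  by rewrite expr2 invfM !mulrA mulfVK ?gt_eqF.
apply: distv_le_normv; rewrite /halfspace /= dotvBr dotvZr -normv_sqr.
by rewrite mulfVK ?gt_eqF ?exprn_gt0 // /t; lra.
Qed.

End Distance.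

Section Penalty.
Variable R : realType.
Implicit Types (dl t : R).

Lemma pdeltaE dl t : 0 < dl ->
  pdelta dl t = Num.min 1 (Num.max 0 ((t + dl) / (2 * dl))).
Proof.
move=> dl0; have dl2 : 0 < 2 * dl by rewrite mulr_gt0.
rewrite /pdelta; set q := (t + dl) / (2 * dl).
case: ifPn => [t_gt|]; last rewrite -leNgt => t_le.
  have q1 : 1 <= q by rewrite /q ler_pdivlMr // mul1r; lra.
  by rewrite max_r ?min_l // (le_trans ler01 q1).
case: ifPn => [t_lt|]; last rewrite -leNgt => t_ge.
  have q0 : q <= 0 by rewrite /q ler_pdivrMr // mul0r; lra.
  by rewrite max_l ?min_r.
have q0 : 0 <= q by rewrite /q ler_pdivlMr // mul0r; lra.
have q1 : q <= 1 by rewrite /q ler_pdivrMr // mul1r; lra.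
by rewrite max_r ?min_r.
Qed.

Lemma pdelta_ge0 dl t : 0 < dl -> 0 <= pdelta dl t.
Proof. by move=> dl0; rewrite pdeltaE // le_min ler01 le_max lexx. Qed.

Lemma pdelta_le1 dl t : 0 < dl -> pdelta dl t <= 1.
Proof. by move=> dl0; rewrite pdeltaE // ge_min lexx. Qed.

Lemma pdelta_mul_ge dl t : 0 < dl -> Num.max 0 t - dl / 4 <= pdelta dl t * t.
Proof.
rewrite /pdelta => dl0; have [t0|t0] := leP t 0.
  case: ifPn => [|_]; first lra.
  case: ifPn => [_|]; first lra.
  rewrite -leNgt mulrAC ler_pdivlMr ?mulr_gt0 //; nra.
case: ifPn => [_|]; first lra.
rewrite -leNgt => t_le; case: ifPn => [|_]; first lra.
rewrite mulrAC ler_pdivlMr ?mulr_gt0 //; nra.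
Qed.

Variable n : nat.
Implicit Types (a z y : 'rV[R]_n) (b : R).

Lemma normv_grad_h_le1 dl a b z : 0 < dl -> a != 0 -> normv (grad_h dl a b z) <= 1.
Proof.
move=> dl0 a0; rewrite /grad_h normvZ normrM ger0_norm ?pdelta_ge0 //.
rewrite normfV ger0_norm ?normv_ge0 // mulfVK ?gt_eqF ?normv_gt0 //.
exact: pdelta_le1.
Qed.

Lemma grad_h_dotv_ge dl a b z y : 0 < dl -> a != 0 -> halfspace a b y ->
  distv z (halfspace a b) - dl / (4 * normv a) <= dotv (grad_h dl a b z) (z - y).
Proof.
rewrite /halfspace /= => dl0 a0 hy; have na : 0 < normv a by rewrite normv_gt0.
set t := dotv a z - b; set p := pdelta dl t.
have key : Num.max 0 t - dl / 4 <= p * (dotv a z - dotv a y).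
  apply: le_trans (pdelta_mul_ge t dl0) _.
  by apply: ler_wpM2l; [exact: pdelta_ge0 | rewrite /t; lra].
rewrite /grad_h dotvZl dotvBr mulrAC.
apply: le_trans (_ : (Num.max 0 t - dl / 4) / normv a <= _); last first.
  by rewrite ler_pM2r ?invr_gt0.
have := distv_halfspace_le b z a0; rewrite mulrBl invfM mulrA; lra.
Qed.

End Penalty.

Section PenaltyStep.
Variables (R : realType) (n : nat) (gf : 'rV[R]_n -> 'rV[R]_n) (s gam dl M : R).
Hypotheses (s_gt0 : 0 < s) (gam_gt0 : 0 < gam) (dl_gt0 : 0 < dl).

Definition penalty_step (a : 'rV[R]_n) (b : R) (z : 'rV[R]_n) : 'rV[R]_n :=
  z - s *: (gf z + gam *: grad_h dl a b z).

Lemma penalty_step_sqdist_le (a : 'rV[R]_n) (b al : R) (z y : 'rV[R]_n) :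
  a != 0 -> halfspace a b y -> 0 < al -> al <= normv a -> normv (gf z) <= M ->
  normv (penalty_step a b z - y) ^+ 2 <=
  normv (z - y) ^+ 2 - 2 * s * dotv (gf z) (z - y)
  - 2 * s * gam * (distv z (halfspace a b) - dl / (4 * al))
  + 2 * s ^+ 2 * (M ^+ 2 + gam ^+ 2).
Proof.
move=> a0 hy al0 al_le gM; set g := gf z; set h := grad_h dl a b z.
have hw : normv (g + gam *: h) ^+ 2 <= 2 * M ^+ 2 + 2 * gam ^+ 2.
  apply: le_trans (sqr_normvD_le _ _) _; rewrite normvZ gtr0_norm // exprMn.
  have g2 : normv g ^+ 2 <= M ^+ 2 by have := normv_ge0 g; nra.
  have h2 : normv h ^+ 2 <= 1.
    by rewrite expr_le1 ?normv_ge0 //; exact: normv_grad_h_le1.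
  have := sqr_ge0 gam; nra.
have hh : distv z (halfspace a b) - dl / (4 * al) <= dotv h (z - y).
  apply: le_trans (grad_h_dotv_ge z dl_gt0 a0 hy); rewrite lerD2l lerN2.
  apply: ler_wpM2l; first exact: ltW.
  have na : 0 < normv a := lt_le_trans al0 al_le.
  by rewrite lef_pV2 ?posrE ?mulr_gt0 //; lra.
have -> : penalty_step a b z - y = (z - y) - s *: (g + gam *: h) by rewrite addrAC.
rewrite (sqr_normvB (z - y)) normvZ gtr0_norm // dotvZr dotvDr dotvZr !(dotvC (z - y)).
have := ler_wpM2l (ltW (mulr_gt0 s_gt0 gam_gt0)) hh.
have := ler_wpM2l (sqr_ge0 s) hw.
lra.
Qed.

End PenaltyStep.

Section MeanStep.
Variables (R : realType) (n m : nat) (a : 'I_m -> 'rV[R]_n) (b : 'I_m -> R).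
Hypotheses (m_gt0 : (0 < m)%N) (a_neq0 : forall c, a c != 0).

Lemma alpha_min_le c : alpha_min a <= normv (a c).
Proof.
apply: ge_inf; last by exists c.
by exists 0 => _ [c' _ <-]; exact: normv_ge0.
Qed.

Lemma alpha_min_gt0 : 0 < alpha_min a.
Proof.
have [c0 _ c0_min] := arg_minP (fun c => normv (a c)) (isT : xpredT (Ordinal m_gt0)).
apply: lt_le_trans (_ : 0 < normv (a c0)) _; first by rewrite normv_gt0.
apply: lb_le_inf; first by exists (normv (a c0)), c0.
by move=> _ [c _ <-]; exact: c0_min.
Qed.

Variables (gf : 'rV[R]_n -> 'rV[R]_n) (s gam dl M : R).
Hypotheses (s_gt0 : 0 < s) (gam_gt0 : 0 < gam) (dl_gt0 : 0 < dl).

Definition mean_penalty_sqdist (y z : 'rV[R]_n) : R :=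
  \sum_(c < m) m%:R^-1 * normv (penalty_step gf s gam dl (a c) (b c) z - y) ^+ 2.

Lemma mean_penalty_sqdist_ge0 (y z : 'rV[R]_n) : 0 <= mean_penalty_sqdist y z.
Proof. by apply: sumr_ge0 => c _; rewrite mulr_ge0 ?invr_ge0 ?sqr_ge0. Qed.

Lemma mean_penalty_sqdist_le (y z : 'rV[R]_n) : Xfeas a b y -> normv (gf z) <= M ->
  mean_penalty_sqdist y z <=
  normv (z - y) ^+ 2 - 2 * s * dotv (gf z) (z - y)
  + s * gam * dl / (2 * alpha_min a)
  - 2 * s * gam / m%:R * \sum_(c < m) distv z (halfspace (a c) (b c))
  + 2 * s ^+ 2 * (M ^+ 2 + gam ^+ 2).
Proof.
move=> yX gM; have al0 := alpha_min_gt0; have m0 : 0 < m%:R :> R by rewrite ltr0n.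
set K := normv (z - y) ^+ 2 - 2 * s * dotv (gf z) (z - y)
  + 2 * s * gam * (dl / (4 * alpha_min a)) + 2 * s ^+ 2 * (M ^+ 2 + gam ^+ 2).
apply: le_trans (_ : \sum_(c < m) m%:R^-1 *
    (K - 2 * s * gam * distv z (halfspace (a c) (b c))) <= _).
  apply: ler_sum => c _; apply: ler_wpM2l; first by rewrite invr_ge0 ltW.
  have := penalty_step_sqdist_le s_gt0 gam_gt0 dl_gt0 (a_neq0 c) (yX c I) al0
    (alpha_min_le c) gM.
  by rewrite /K; lra.
rewrite -mulr_sumr sumrB sumr_const card_ord -mulr_sumr -mulr_natr /K.
by rewrite le_eqVlt; apply/orP; left; apply/eqP; field; rewrite !gt_eqF.
Qed.

End MeanStep.

Lemma strongly_convex_bounded_subgrad (R : realType) n (f : 'rV[R]_n -> R) mu M u v g :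
  strongly_convex f mu -> subgrad f v g -> normv g <= M ->
  f v - M * normv (u - v) + mu / 2 * normv (u - v) ^+ 2 <= f u.
Proof.
move=> fmu vg gM; apply: le_trans (fmu u v g vg); rewrite lerD2r lerD2l.
apply: le_trans (dotv_ge_Nnormv g (u - v)); rewrite lerN2.
by apply: ler_wpM2r; [exact: normv_ge0 | exact: gM].
Qed.

Lemma mean_penalty_sqdist_bound (R : realType) (n m : nat)
    (a : 'I_m -> 'rV[R]_n) (b : 'I_m -> R) (beta : R) (f : 'rV[R]_n -> R)
    (mu : R) (gf PiX : 'rV[R]_n -> 'rV[R]_n) (s gam dl M eta : R) (y z : 'rV[R]_n) :
  (0 < m)%N -> (forall c, a c != 0) -> hoffman a b beta ->
  (forall z, is_proj (Xfeas a b) z (PiX z)) ->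
  strongly_convex f mu -> (forall z, subgrad f z (gf z)) ->
  0 < s -> 0 < gam -> 0 < dl -> 0 <= eta <= 1 -> Xfeas a b y ->
  normv (gf z) <= M -> (forall v, subgrad f (PiX z) v -> normv v <= M) ->
  mean_penalty_sqdist a b gf s gam dl y z
  <= (1 - mu * s) * normv (z - y) ^+ 2
     + 2 * s * (1 - eta) * (f y - f z)
     + 2 * s * eta * (f y - f (PiX z))
     + s * gam * dl / (2 * alpha_min a)
     - 2 * s * (gam / (m%:R * beta) - eta * M) * distv z (Xfeas a b)
     - eta * mu * s * distv z (Xfeas a b) ^+ 2
     + 2 * s ^+ 2 * (M ^+ 2 + gam ^+ 2).
Proof.
move=> m0 a0 [beta0 hoff] proj fmu gf_sub s0 gam0 dl0 /andP[eta0 eta1] yX gM PiXM.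
have m0R : 0 < m%:R :> R by rewrite ltr0n.
set D := distv z (Xfeas a b); set S := \sum_(c < m) distv z (halfspace (a c) (b c)).
have mean := mean_penalty_sqdist_le m0 a0 s0 gam0 dl0 yX gM.
have conv_z : f z - dotv (gf z) (z - y) + mu / 2 * normv (z - y) ^+ 2 <= f y.
  have := fmu y z (gf z) (gf_sub z).
  by rewrite -opprB dotvNr normvN.
have conv_PiX : f (PiX z) - M * D + mu / 2 * D ^+ 2 <= f z.
  rewrite /D (is_proj_distv (proj z)).
  exact: strongly_convex_bounded_subgrad fmu (gf_sub _) (PiXM _ (gf_sub _)).
have hoffD : gam / (m%:R * beta) * D <= gam / m%:R * S.
  have -> : gam / (m%:R * beta) * D = gam / m%:R * (D / beta).
    by field; rewrite !gt_eqF.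
  apply: ler_wpM2l; first by rewrite divr_ge0 ?ltW.
  by rewrite ler_pdivrMr // mulrC hoff.
have s2 : 0 <= 2 * s by rewrite mulr_ge0 ?ltW.
have := ler_wpM2l s2 conv_z; have := ler_wpM2l (mulr_ge0 s2 eta0) conv_PiX.
have := ler_wpM2l s2 hoffD; move: mean; rewrite -/S.
lra.
Qed.

Section SubSigmaAlgebra.
Local Open Scope ereal_scope.
Context d (T : measurableType d) (R : realType) (G : set (set T)).
Hypothesis G_meas : G `<=` measurable.
Local Notation TG := (g_sigma_algebraType G).

Lemma sub_sigma_measurable : <<s G >> `<=` measurable.
Proof. exact: smallest_sub (@sigma_algebra_measurable _ T) G_meas. Qed.

Lemma measurable_fun_sub_sigma d' (U : measurableType d') (h : T -> U) :
  measurable_fun (setT : set TG) h -> measurable_fun (setT : set T) h.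
Proof.
move=> mh _ B mB; have := mh measurableT B mB.
by rewrite !setTI; exact: sub_sigma_measurable.
Qed.

Section NonnegIntegrand.
Import HBNNSimple.
Variables (h : T -> R) (mh : measurable_fun (setT : set TG) h)
  (h0 : forall x, (0 <= h x)%R).

Let mhE : measurable_fun (setT : set TG) (fun x => (h x)%:E).
Proof. exact/measurable_EFinP. Qed.

Let h_ := nnsfun_approx (@measurableT _ TG) mhE.

Let mh_ k : measurable_fun (setT : set T) (h_ k).
Proof. exact: measurable_fun_sub_sigma (measurable_funPT (h_ k)). Qed.

Let mh_preimage k r : measurable (h_ k @^-1` [set r] : set T).
Proof. by have := mh_ k measurableT (measurable_set1 r); rewrite setTI. Qed.

(* Integrating the simple approximations of [h] only involves the sets
   [h_ k @^-1` [set r]], which lie in the smaller sigma-algebra. *)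
Let integral_approxE (mu : {measure set T -> \bar R}) (E : set T) : measurable E ->
  \int[mu]_(x in E) (h x)%:E =
  limn (fun k => \sum_(r \in range (h_ k)) (r%:E * mu (h_ k @^-1` [set r] `&` E))).
Proof.
move=> mE; transitivity (limn (fun k => \int[mu]_(x in E) (h_ k x)%:E)).
  rewrite -monotone_convergence //.
  - apply: eq_integral => x _; apply/esym/cvg_lim => //.
    by apply: (@cvg_nnsfun_approx _ TG R setT) => // y _; rewrite lee_fin.
  - by move=> k; apply/measurable_funTS/measurable_EFinP.
  - by move=> k x _; rewrite lee_fin.
  - move=> x _ k l kl; rewrite lee_fin.
    have /lefP := @nd_nnsfun_approx _ TG R setT (@measurableT _ TG) _ mhE k l kl.
    by apply.
congr (limn _); apply/funext => k.
under eq_integral do rewrite fimfunE -fsumEFin //.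
rewrite ge0_integral_fsum //; last 2 first.
- move=> r; apply/measurable_EFinP; apply: measurable_funM => //.
  by apply: measurable_indic; exact: mh_preimage.
- by move=> r x _; rewrite nnfun_muleindic_ge0.
apply: eq_fsbigr => r _.
have := @integralZl_indic _ T R mu E mE (fun r => h_ k @^-1` [set r] : set T) r
  (fun r0 => preimage_nnfun0 (h_ k) r0) (mh_preimage k r).
by rewrite /= integral_indic // => ->.
Qed.

Lemma integral_sub_sigma (mu1 mu2 : {measure set T -> \bar R}) (E1 E2 : set T) :
  measurable E1 -> measurable E2 ->
  (forall B, <<s G >> B -> mu1 (B `&` E1) = mu2 (B `&` E2)) ->
  \int[mu1]_(x in E1) (h x)%:E = \int[mu2]_(x in E2) (h x)%:E.
Proof.
move=> mE1 mE2 mu12; rewrite (integral_approxE mu1 mE1) (integral_approxE mu2 mE2).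
congr (limn _); apply/funext => k; apply: eq_fsbigr => r _; rewrite mu12 //.
exact: (@measurable_funPTI _ _ TG R (h_ k) [set r] (measurable_set1 r)).
Qed.

End NonnegIntegrand.

Lemma integral_gap_measure0 (mu : {finite_measure set T -> \bar R}) (A : set T)
    (Y Z : T -> R) (e N : R) :
  measurable A -> measurable_fun A Y -> measurable_fun A Z -> (0 < e)%R ->
  (forall x, A x -> (0 <= Y x <= N)%R) -> (forall x, A x -> (Y x + e <= Z x)%R) ->
  \int[mu]_(x in A) (Z x)%:E = \int[mu]_(x in A) (Y x)%:E -> mu A = 0.
Proof.
move=> mA mY mZ e0 YN YeZ ZY.
have mYE : measurable_fun A (fun x => (Y x)%:E) by exact/measurable_EFinP.
have Y0 x : A x -> 0 <= (Y x)%:E by move=> /YN /andP[Y0 _]; rewrite lee_fin.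
have finY : \int[mu]_(x in A) (Y x)%:E \is a fin_num.
  rewrite ge0_fin_numE; last exact: integral_ge0.
  apply: le_lt_trans (_ : \int[mu]_(x in A) (cst N%:E) x < +oo).
    by apply: ge0_le_integral => // x /YN /andP[_]; rewrite lee_fin.
  by rewrite integral_cst // ltey_eq fin_numM // fin_num_measure.
have : \int[mu]_(x in A) ((Y x)%:E + e%:E) <= \int[mu]_(x in A) (Y x)%:E.
  rewrite -ZY; apply: ge0_le_integral => //.
  - by move=> x Ax; rewrite adde_ge0 ?Y0 // lee_fin ltW.
  - exact: emeasurable_funD.
  - exact/measurable_EFinP.
rewrite ge0_integralD //; last by move=> x _; rewrite lee_fin ltW.
rewrite integral_cst // -[leRHS]adde0 leeD2lE // => emu.
apply/eqP; rewrite eq_le measure_ge0 andbT.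
by rewrite -(@pmule_lle0 _ e%:E) ?lte_fin // muleC.
Qed.

Lemma cond_exp_version_le (P : probability T R) (X Y Z : T -> R) :
  cond_exp_version P <<s G >> X Z ->
  measurable_fun (setT : set TG) Y -> (forall x, (0 <= Y x)%R) ->
  (forall A, <<s G >> A -> \int[P]_(x in A) (X x)%:E = \int[P]_(x in A) (Y x)%:E) ->
  {ae P, forall x, (Z x <= Y x)%R}.
Proof.
move=> [mZ _ XZ] mY Y0 XY.
have mZG : measurable_fun (setT : set TG) Z by move=> _ B mB; rewrite setTI; exact: mZ.
(* The bound [Y <= N] keeps the integral of [Y] over [A N] finite. *)
pose A (N : nat) := [set x | Y x + N.+1%:R^-1 <= Z x]%R `&` [set x | Y x <= N%:R]%R.
have mAG N : measurable (A N : set TG).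
  apply: measurableI.
  - have mYN := measurable_funD mY (measurable_cst (N.+1%:R^-1 : R)%R).
    have := measurable_fun_ler mYN mZG measurableT (Y := [set true]) I.
    by rewrite setTI.
  - have := measurable_fun_ler mY (measurable_cst (N%:R : R)%R) measurableT
      (Y := [set true]) I.
    by rewrite setTI.
have PA0 N : P (A N) = 0.
  apply: (@integral_gap_measure0 P (A N) Y Z N.+1%:R^-1 N%:R).
  - exact: sub_sigma_measurable (mAG N).
  - exact/measurable_funTS/measurable_fun_sub_sigma.
  - exact/measurable_funTS/measurable_fun_sub_sigma.
  - by rewrite invr_gt0 ltr0n.
  - by move=> x [_ /= YN]; rewrite Y0.
  - by move=> x [/= YZ _].
  - by rewrite XZ ?XY //; exact: mAG.
have negA : P.-negligible (\bigcup_N A N).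
  apply: negligible_bigcup => N; exists (A N).
  by split; [exact: sub_sigma_measurable (mAG N) | exact: PA0 |].
apply: negligibleS negA => x /negP; rewrite -ltNge -subr_gt0 => YZ.
pose N := ((Num.truncn (Y x)).+1 + Num.truncn ((Z x - Y x)^-1))%N.
exists N => //; split => /=.
- rewrite -lerBrDl -[leRHS]invrK lef_pV2 ?posrE ?invr_gt0 ?ltr0n //.
  apply: ltW; apply: lt_le_trans (truncnS_gt _) _.
  by rewrite ler_nat ltnS leq_addl.
- apply: ltW; apply: lt_le_trans (truncnS_gt _) _.
  by rewrite ler_nat leq_addr.
Qed.

End SubSigmaAlgebra.

(* [g_sigma_algebraType] needs a canonical pointed type, which ['rV[R]_n]
   does not provide directly. *)
Definition rV_pointed (R : realType) n := 'rV[R]_n.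
HB.instance Definition _ R n := Choice.on (rV_pointed R n).
HB.instance Definition _ R n := isPointed.Build (rV_pointed R n) 0.

Section RowVectorMeasurability.
Variables (R : realType) (n : nat).

Definition rV_coord_sets : set (set (rV_pointed R n)) :=
  [set A | exists (j : 'I_n) (B : set R),
             measurable B /\ A = (fun v : 'rV[R]_n => v ord0 j) @^-1` B].

Definition rV_borelType := g_sigma_algebraType rV_coord_sets.

Lemma measurable_rV_coord (j : 'I_n) :
  measurable_fun (setT : set rV_borelType) (fun v : rV_borelType => v ord0 j).
Proof. by move=> _ B mB; rewrite setTI; apply: sub_sigma_algebra; exists j, B. Qed.

Lemma measurable_fun_rV d (T : measurableType d) (X : T -> rV_borelType) :
  (forall j, measurable_fun setT (fun w => X w ord0 j)) -> measurable_fun setT X.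
Proof.
move=> mX; apply: (@measurability _ _ T rV_borelType setT X rV_coord_sets) => //.
by move=> _ [_ [j [B [mB ->]]] <-]; exact: mX.
Qed.

Lemma measurable_dotv (a : 'rV[R]_n) :
  measurable_fun (setT : set rV_borelType) (fun v : rV_borelType => dotv a v).
Proof.
by apply: measurable_sum => j; apply: measurable_funM => //; exact: measurable_rV_coord.
Qed.

Lemma measurable_pdelta (dl : R) : 0 < dl -> measurable_fun setT (pdelta dl).
Proof.
move=> dl0; rewrite (funext (fun t => pdeltaE t dl0)).
apply: measurable_minr => //; apply: measurable_maxr => //.
by apply: measurable_funM => //; exact: measurable_funD.
Qed.

Lemma measurable_penalty_step (gf : 'rV[R]_n -> 'rV[R]_n) (s gam dl : R)
    (a : 'rV[R]_n) (b : R) :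
  rV_borel_fun gf -> 0 < dl ->
  measurable_fun (setT : set rV_borelType)
    (penalty_step gf s gam dl a b : rV_borelType -> rV_borelType).
Proof.
move=> mgf dl0; apply: measurable_fun_rV => j.
rewrite (_ : (fun v => _) = fun v : rV_borelType => v ord0 j - s * (gf v ord0 j
    + gam * (pdelta dl (dotv a v - b) / normv a * a ord0 j))); last first.
  by apply/funext => v; rewrite !mxE.
apply: measurable_funB; first exact: measurable_rV_coord.
apply: measurable_funM => //; apply: measurable_funD.
  by move=> _ B mB; rewrite setTI; exact: mgf.
apply: measurable_funM => //; apply: measurable_funM => //; apply: measurable_funM => //.
apply: measurableT_comp (measurable_pdelta dl0) _.
by apply: measurable_funB => //; exact: measurable_dotv.
Qed.

Lemma measurable_sqr_normvB (y : 'rV[R]_n) :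
  measurable_fun (setT : set rV_borelType) (fun v : rV_borelType => normv (v - y) ^+ 2).
Proof.
rewrite (funext (fun v => normv_sqr (v - y))).
apply: measurable_sum => j.
have mj : measurable_fun setT (fun v : rV_borelType => (v - y) ord0 j).
  under eq_fun do rewrite !mxE.
  by apply: measurable_funB => //; exact: measurable_rV_coord.
exact: (measurable_funM mj mj).
Qed.

End RowVectorMeasurability.

Lemma indexed_sum_indic (T : Type) (R : pzRingType) m (i : T -> 'I_m)
    (F : 'I_m -> T -> R) w :
  F (i w) w = \sum_(c < m) \1_(i @^-1` [set c]) w * F c w.
Proof.
rewrite (bigD1 (i w)) //= big1 ?addr0; first by rewrite indicE mem_set // mul1r.
by move=> c /eqP ic; rewrite indicE memNset ?mul0r // => /= ci; apply: ic.
Qed.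

Lemma measurable_fun_indexed d (T : measurableType d) (R : realType) m
    (i : T -> 'I_m) (F : 'I_m -> T -> R) :
  (forall c, measurable (i @^-1` [set c])) -> (forall c, measurable_fun setT (F c)) ->
  measurable_fun setT (fun w => F (i w) w).
Proof.
move=> mi mF; rewrite (funext (indexed_sum_indic i F)).
by apply: measurable_sum => c; apply: measurable_funM => //; exact: measurable_indic.
Qed.

Section RandomPenaltyIteration.
Context (R : realType) d (T : measurableType d) (P : probability T R) (n m : nat)
  (a : 'I_m -> 'rV[R]_n) (b : 'I_m -> R) (gf : 'rV[R]_n -> 'rV[R]_n)
  (gamma delta s : nat -> R) (x : nat -> T -> 'rV[R]_n) (i : nat -> T -> 'I_m)
  (k : nat).
Hypotheses (gf_borel : rV_borel_fun gf) (delta_gt0 : forall l, (1 <= l)%N -> 0 < delta l)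
  (x1_rvec : rvec (x 1%N))
  (i_meas : forall l, (1 <= l)%N -> forall c, measurable (i l @^-1` [set c]))
  (x_next : forall l, (1 <= l)%N -> forall w, x l.+1 w =
     penalty_step gf (s l) (gamma l) (delta l) (a (i l w)) (b (i l w)) (x l w))
  (k_ge1 : (1 <= k)%N).

Definition past_sets : set (set T) :=
  [set A | (exists (j : 'I_n) (B : set R),
              measurable B /\ A = (fun w => x 1%N w ord0 j) @^-1` B)
        \/ (exists (l : nat) (c : 'I_m), (1 <= l < k)%N /\ A = i l @^-1` [set c])].

Definition iterate_sets : set (set T) :=
  [set A | exists (l : nat) (j : 'I_n) (B : set R),
     [/\ (1 <= l <= k)%N, measurable B & A = (fun w => x l w ord0 j) @^-1` B]].

Local Notation Tpast := (g_sigma_algebraType past_sets).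
Local Notation Titer := (g_sigma_algebraType iterate_sets).

Lemma past_sets_measurable : past_sets `<=` measurable.
Proof.
move=> _ [[j [B [mB ->]]] | [l [c [/andP[l1 _] ->]]]]; last exact: i_meas.
by have := x1_rvec j measurableT mB; rewrite setTI.
Qed.

Lemma measurable_iterate_past l : (1 <= l <= k)%N -> forall j : 'I_n,
  measurable_fun (setT : set Tpast) (fun w => x l w ord0 j).
Proof.
elim: l => [//|[|l] IH] /andP[_ lk] j.
  by move=> _ B mB; rewrite setTI; apply: sub_sigma_algebra; left; exists j, B.
pose F c w :=
  penalty_step gf (s l.+1) (gamma l.+1) (delta l.+1) (a c) (b c) (x l.+1 w) ord0 j.
rewrite (_ : (fun w => _) = fun w => F (i l.+1 w) w); last first.
  by apply/funext => w; rewrite x_next.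
apply: (@measurable_fun_indexed _ Tpast R m (i l.+1) F) => c.
  by apply: sub_sigma_algebra; right; exists l.+1, c.
have mx : measurable_fun (setT : set Tpast) (x l.+1 : Tpast -> rV_borelType R n).
  by apply: measurable_fun_rV; apply: IH; rewrite /= ltnW.
have mstep := measurable_penalty_step (s l.+1) (gamma l.+1) (a c) (b c) gf_borel
  (delta_gt0 (isT : 0 < l.+1)%N).
exact: measurableT_comp (measurable_rV_coord j) (measurableT_comp mstep mx).
Qed.

Lemma iterate_sets_sub_past : iterate_sets `<=` <<s past_sets >>.
Proof.
move=> _ [l [j [B [lk mB ->]]]].
by have := measurable_iterate_past lk j measurableT mB; rewrite setTI.
Qed.

Lemma iterate_sigma_sub_past : <<s iterate_sets >> `<=` <<s past_sets >>.
Proof. exact: smallest_sub (@sigma_algebra_measurable _ Tpast) iterate_sets_sub_past. Qed.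

Lemma iterate_sets_measurable : iterate_sets `<=` measurable.
Proof.
by move=> A /iterate_sets_sub_past /(sub_sigma_measurable past_sets_measurable).
Qed.

Lemma measurable_mean_sqdist_iterate (y : 'rV[R]_n) :
  measurable_fun (setT : set Titer)
    (fun w => mean_penalty_sqdist a b gf (s k) (gamma k) (delta k) y (x k w)).
Proof.
have mx : measurable_fun (setT : set Titer) (x k : Titer -> rV_borelType R n).
  apply: measurable_fun_rV => j _ B mB; rewrite setTI; apply: sub_sigma_algebra.
  by exists k, j, B; rewrite k_ge1 leqnn.
apply: measurable_sum => c; apply: measurable_funM => //.
have mstep := measurable_penalty_step (s k) (gamma k) (a c) (b c) gf_borel
  (delta_gt0 k_ge1).
exact: measurableT_comp (measurable_sqr_normvB y) (measurableT_comp mstep mx).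
Qed.

Hypotheses
  (i_unif : forall c, P (i k @^-1` [set c]) = (m%:R^-1)%:E)
  (i_indep : forall A, <<s past_sets >> A -> forall c,
     P (A `&` i k @^-1` [set c]) = (P A * P (i k @^-1` [set c]))%E).

(* Since [i k] is uniform and independent of [x 1, i 1, ..., i (k-1)], which
   determine [x k], integrating over [i k] averages the [m] possible steps. *)
Lemma integral_sqdist_next (y : 'rV[R]_n) (A : set T) : <<s iterate_sets >> A ->
  (\int[P]_(w in A) (normv (x k.+1 w - y) ^+ 2)%:E =
   \int[P]_(w in A)
      (mean_penalty_sqdist a b gf (s k) (gamma k) (delta k) y (x k w))%:E)%E.
Proof.
move=> /iterate_sigma_sub_past Apast.
have mA : measurable A := sub_sigma_measurable past_sets_measurable Apast.
pose h c w :=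
  normv (penalty_step gf (s k) (gamma k) (delta k) (a c) (b c) (x k w) - y) ^+ 2.
have h0 c w : 0 <= h c w by exact: sqr_ge0.
have mh c : measurable_fun (setT : set Tpast) (h c).
  have mx : measurable_fun (setT : set Tpast) (x k : Tpast -> rV_borelType R n).
    by apply: measurable_fun_rV; apply: measurable_iterate_past; rewrite k_ge1 leqnn.
  have mstep := measurable_penalty_step (s k) (gamma k) (a c) (b c) gf_borel
    (delta_gt0 k_ge1).
  exact: measurableT_comp (measurable_sqr_normvB y) (measurableT_comp mstep mx).
have mhT c := measurable_fun_sub_sigma past_sets_measurable (mh c).
have mI c : measurable (i k @^-1` [set c]) := i_meas k_ge1 c.
rewrite (eq_integral (fun w => \sum_(c < m) (\1_(i k @^-1` [set c]) w * h c w)%:E));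
  last first.
  by move=> w _; rewrite sumEFin -(indexed_sum_indic (i k) h) x_next.
rewrite /mean_penalty_sqdist; under [RHS]eq_integral do rewrite -sumEFin.
rewrite !ge0_integral_sum //; last 4 first.
- move=> c; apply/measurable_EFinP/measurable_funTS.
  exact: measurable_funM (measurable_cst _) (mhT c).
- by move=> c w _; rewrite lee_fin mulr_ge0 ?invr_ge0 ?sqr_ge0.
- move=> c; apply/measurable_EFinP/measurable_funTS.
  exact: measurable_funM (measurable_indic (mI c)) (mhT c).
- by move=> c w _; rewrite lee_fin mulr_ge0.
apply: eq_bigr => c _.
have minv : (0 <= m%:R^-1 :> R) by rewrite invr_ge0.
transitivity (\int[P]_(w in A `&` i k @^-1` [set c]) (h c w)%:E)%E.
  rewrite integral_mkcondr; apply: eq_integral => w _.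
  by rewrite /patch indicE; case: ifP; rewrite ?mul1r ?mul0r.
rewrite (@integral_sub_sigma _ T R past_sets past_sets_measurable (h c) (mh c) (h0 c)
  P (mscale (NngNum minv) P) _ _ (measurableI _ _ mA (mI c)) mA); last first.
  move=> B mB; rewrite setIA.
  transitivity (P (B `&` A) * P (i k @^-1` [set c]))%E.
    by apply: i_indep; exact: (@measurableI _ Tpast).
  by rewrite i_unif muleC.
have mhE : measurable_fun A (fun w => (h c w)%:E).
  exact/measurable_funTS/measurable_EFinP.
have hE0 w : A w -> (0 <= (h c w)%:E)%E by rewrite lee_fin.
rewrite ge0_integral_mscale //.
rewrite [RHS](eq_integral (fun w => (m%:R^-1)%:E * (h c w)%:E)%E).
  by rewrite ge0_integralZl // lee_fin.
by move=> w _; rewrite EFinM.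
Qed.

End RandomPenaltyIteration.

Theorem lemma15 (R : realType) (d : measure_display) (T : measurableType d)
  (P : probability T R) (n m : nat)
  (a : 'I_m -> 'rV[R]_n) (b : 'I_m -> R) (beta : R)
  (f : 'rV[R]_n -> R) (mu : R) (gf : 'rV[R]_n -> 'rV[R]_n)
  (PiX : 'rV[R]_n -> 'rV[R]_n)
  (gamma delta s : nat -> R) (M eta : R)
  (x : nat -> T -> 'rV[R]_n) (i : nat -> T -> 'I_m) :
  (0 < m)%N ->
  (forall l, a l != 0) ->
  (exists z, Xfeas a b z) ->
  hoffman a b beta ->
  (forall z, is_proj (Xfeas a b) z (PiX z)) ->
  0 <= mu -> strongly_convex f mu ->
  (forall z, subgrad f z (gf z)) -> rV_borel_fun gf ->
  (forall k, (1 <= k)%N -> [/\ 0 < gamma k, 0 < delta k & 0 < s k]) ->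
  (* random initial point with finite second moment *)
  rvec (x 1%N) ->
  (\int[P]_w ((normv (x 1%N w)) ^+ 2)%:E < +oo)%E ->
  (* i_k uniform on {1..m}, independent of x_1, i_1, ..., i_{k-1} *)
  (forall k, (1 <= k)%N -> forall c : 'I_m,
     measurable (i k @^-1` [set c]) /\
     P (i k @^-1` [set c]) = (m%:R^-1)%:E) ->
  (forall k, (1 <= k)%N -> forall A, past_sigma x i k A -> forall c : 'I_m,
     P (A `&` i k @^-1` [set c]) = (P A * P (i k @^-1` [set c]))%E) ->
  (* the random incremental penalty iteration *)
  (forall k, (1 <= k)%N -> forall w,
     x k.+1 w = x k w - s k *: (gf (x k w) +
                 gamma k *: grad_h (delta k) (a (i k w)) (b (i k w)) (x k w))) ->
  0 < M ->
  {ae P, forall w, forall k, (1 <= k)%N ->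
     normv (gf (x k w)) <= M /\
     forall v, subgrad f (PiX (x k w)) v -> normv v <= M} ->
  0 <= eta <= 1 ->
  forall y, Xfeas a b y -> forall k, (1 <= k)%N ->
  forall Z : T -> R,
    cond_exp_version P (filtr x k) (fun w => normv (x k.+1 w - y) ^+ 2) Z ->
  {ae P, forall w,
     Z w <= (1 - mu * s k) * normv (x k w - y) ^+ 2
            + 2 * s k * (1 - eta) * (f y - f (x k w))
            + 2 * s k * eta * (f y - f (PiX (x k w)))
            + s k * gamma k * delta k / (2 * alpha_min a)
            - 2 * s k * (gamma k / (m%:R * beta) - eta * M)
                * distv (x k w) (Xfeas a b)
            - eta * mu * s k * distv (x k w) (Xfeas a b) ^+ 2
            + 2 * s k ^+ 2 * (M ^+ 2 + gamma k ^+ 2)}.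
Proof.
move=> m0 a0 _ hoff proj _ fmu gf_sub gf_borel pos x1 _ i_law i_indep x_next _
  M_bounds eta01 y yX k k1 Z Z_cond.
have [gam0 dl0 s0] := pos k k1.
have delta_gt0 l (l1 : (1 <= l)%N) : 0 < delta l by have [] := pos l l1.
have i_meas l (l1 : (1 <= l)%N) c := (i_law l l1 c).1.
have Z_le := cond_exp_version_le
  (iterate_sets_measurable (k := k) gf_borel delta_gt0 x1 i_meas x_next) Z_cond
  (measurable_mean_sqdist_iterate a b gamma s gf_borel delta_gt0 k1 y)
  (fun w => mean_penalty_sqdist_ge0 a b gf (s k) (gamma k) (delta k) y (x k w))
  (integral_sqdist_next gf_borel delta_gt0 x1 i_meas x_next k1
     (fun c => (i_law k k1 c).2) (i_indep k k1) y).
apply: filterS2 M_bounds Z_le => w /(_ k k1) [gM PiXM] /le_trans; apply.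
exact: mean_penalty_sqdist_bound m0 a0 hoff proj fmu gf_sub s0 gam0 dl0 eta01 yX gM PiXM.
Qed.
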